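(* Let $(u_k)_{k\in\mathbb{N}}$ be the positive roots of the equation $u=\tan(u)$. Then for every $s\in(0,1)$ there exists $k_0\in\mathbb{N}$ such that $u_{k_0}$ is not a root of the equation $u/s=\tan(u/s)$. *)

From Stdlib Require Import Reals.
Open Scope R_scope.

(* x is a (real) root of the equation  x = tan x  (tan must be defined at x,
   i.e. cos x <> 0; Stdlib's tan is sin/cos and total). *)
Definition tan_root (x : R) : Prop := cos x <> 0 /\ x = tan x.

Definition enumerates_pos_tan_roots (u : nat -> R) : Prop :=
  (forall k m, (k < m)%nat -> u k < u m) /\
  (forall x, (0 < x /\ tan_root x) <-> exists k, u k = x).

From Stdlib Require Import Reals Lra Lia Classical.
Open Scope R_scope.

(* Since sin (x - atan x) is a positive multiple of sin x - x cos x, the roots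
   of x = tan x are exactly the solutions of x - atan x = k PI, k an integer.
   Suppose x |-> a x, with a > 1, sent positive roots to roots, and let the
   root x of index n go to the root a x of index m. Then
     a (2 n + 1) - (2 m + 1) = 2 (a atan (1/x) - atan (1/(a x))) / PI,
   a "scaling defect" that is positive and tends to 0 as x grows. If d and d'
   are the defects of the roots of indices n and 3 n + 1, then d' - 3 d is an
   even integer, so d' = 3 d as soon as both are below 2/3. Iterating n |->
   3 n + 1 from a large root, the defects would grow without bound. *)

Lemma tan_root_iff_sin (x : R) : tan_root x <-> sin x = x * cos x.
Proof.
  split.
  - intros [Hc Ht]. unfold tan in Ht. rewrite Ht at 2. field. exact Hc.
  - intros Hs.
    assert (Hc : cos x <> 0).
    { intros Hc. pose proof (sin2_cos2 x) as H1.
      rewrite Hs, Hc in H1. unfold Rsqr in H1. lra. }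
    split; [exact Hc|]. unfold tan. rewrite Hs. field. exact Hc.
Qed.

Lemma sqrt_1_plus_sqr_pos (x : R) : 0 < sqrt (1 + x²).
Proof. apply sqrt_lt_R0. pose proof (Rle_0_sqr x). lra. Qed.

Lemma sin_sub_atan (x : R) :
  sin (x - atan x) = (sin x - x * cos x) / sqrt (1 + x²).
Proof.
  rewrite sin_minus, sin_atan, cos_atan. field.
  apply Rgt_not_eq, sqrt_1_plus_sqr_pos.
Qed.

Lemma tan_root_iff_sub_atan (x : R) :
  tan_root x <-> exists k : Z, x - atan x = IZR k * PI.
Proof.
  pose proof (sqrt_1_plus_sqr_pos x) as Hsq.
  rewrite tan_root_iff_sin. split.
  - intros Hs. apply sin_eq_0_0. rewrite sin_sub_atan, Hs. field. lra.
  - intros Hk. pose proof (sin_eq_0_1 _ Hk) as H0. rewrite sin_sub_atan in H0.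
    apply Rminus_diag_uniq.
    replace (sin x - x * cos x)
      with ((sin x - x * cos x) / sqrt (1 + x²) * sqrt (1 + x²)) by (field; lra).
    rewrite H0. ring.
Qed.

Lemma sub_atan_surjective (c : R) : exists x, x - atan x = c.
Proof.
  pose proof PI_RGT_0 as Hpi.
  assert (Hcont : continuity (fun x => x - atan x - c)).
  { apply continuity_minus; [apply continuity_minus|].
    - apply derivable_continuous, derivable_id.
    - intros t. apply derivable_continuous_pt, derivable_pt_atan.
    - apply continuity_const. intros t t'. reflexivity. }
  destruct (IVT _ (c - PI / 2) (c + PI / 2) Hcont) as [x [_ Hx]].
  - lra.
  - pose proof (atan_bound (c - PI / 2)). lra.
  - pose proof (atan_bound (c + PI / 2)). lra.
  - exists x. lra.
Qed.

Lemma atan_lt_id (t : R) : 0 < t -> atan t < t.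
Proof.
  intros Ht.
  destruct (MVT_cor1 atan 0 t derivable_pt_atan Ht) as [c [Hmvt Hc]].
  rewrite derive_pt_atan, atan_0 in Hmvt.
  assert (Hc2 : 0 < c²) by (unfold Rsqr; nra).
  assert (Hat : atan t * (1 + c²) = t).
  { replace (atan t) with (atan t - 0) by ring. rewrite Hmvt. field. lra. }
  nra.
Qed.

Definition scaling_defect (a x : R) : R :=
  2 * (a * atan (/ x) - atan (/ (a * x))) / PI.

Lemma scaling_defect_roots (a x : R) (n m : Z) :
  0 < a -> 0 < x ->
  x - atan x = IZR n * PI -> a * x - atan (a * x) = IZR m * PI ->
  scaling_defect a x = a * (2 * IZR n + 1) - (2 * IZR m + 1).
Proof.
  intros Ha Hx Hn Hm. pose proof PI_RGT_0 as Hpi.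
  unfold scaling_defect.
  rewrite !atan_inv by nra.
  replace (atan x) with (x - IZR n * PI) by lra.
  replace (atan (a * x)) with (a * x - IZR m * PI) by lra.
  field. lra.
Qed.

Lemma scaling_defect_pos (a x : R) : 1 < a -> 0 < x -> 0 < scaling_defect a x.
Proof.
  intros Ha Hx. pose proof PI_RGT_0 as Hpi.
  assert (Hlt : atan (/ (a * x)) < atan (/ x)).
  { apply atan_increasing, Rinv_lt_contravar; nra. }
  assert (Hpos : 0 < atan (/ x)).
  { rewrite <- atan_0. apply atan_increasing, Rinv_0_lt_compat, Hx. }
  unfold scaling_defect, Rdiv.
  apply Rmult_lt_0_compat; [nra | apply Rinv_0_lt_compat, Hpi].
Qed.

Lemma scaling_defect_lt (a x : R) :
  0 < a -> 0 < x -> scaling_defect a x < 2 * a / (PI * x).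
Proof.
  intros Ha Hx. pose proof PI_RGT_0 as Hpi.
  assert (Hlt : atan (/ x) < / x) by (apply atan_lt_id, Rinv_0_lt_compat, Hx).
  assert (Hpos : 0 < atan (/ (a * x))).
  { rewrite <- atan_0. apply atan_increasing, Rinv_0_lt_compat. nra. }
  replace (2 * a / (PI * x)) with (2 * (a * / x) / PI) by (field; lra).
  unfold scaling_defect, Rdiv.
  apply Rmult_lt_compat_r; [apply Rinv_0_lt_compat, Hpi | nra].
Qed.

Lemma tripling_closed_bounded_empty (P : R -> Prop) (B : R) :
  (forall d, P d -> 0 < d < B) -> (forall d, P d -> P (3 * d)) ->
  forall d, ~ P d.
Proof.
  intros Hbound Htriple d Hd.
  assert (Hgrow : forall k e, P e -> (INR k + 1) * e < B).
  { induction k as [|k IH]; intros e He; pose proof (Hbound e He).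
    - simpl. lra.
    - rewrite S_INR. specialize (IH _ (Htriple e He)). pose proof (pos_INR k). nra. }
  destruct (Hbound d Hd) as [Hd0 _].
  destruct (INR_unbounded (B / d)) as [k Hk].
  assert (HkB : B < INR k * d).
  { replace B with (B / d * d) by (field; lra). apply Rmult_lt_compat_r; lra. }
  specialize (Hgrow k d Hd). lra.
Qed.

Section ScalingTanRoots.

Variable a : R.
Hypothesis a_gt1 : 1 < a.
Hypothesis scale_tan_root : forall x, 0 < x -> tan_root x -> tan_root (a * x).

Lemma scaled_root_index (x : R) (n : Z) :
  0 < x -> x - atan x = IZR n * PI ->
  exists m : Z, a * x - atan (a * x) = IZR m * PI.
Proof.
  intros Hx Hn. apply tan_root_iff_sub_atan, scale_tan_root; [exact Hx|].
  apply tan_root_iff_sub_atan. exists n. exact Hn.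
Qed.

Lemma scaling_defect_triple (y z : R) (n : Z) :
  0 < y -> 0 < z ->
  y - atan y = IZR n * PI -> z - atan z = IZR (3 * n + 1) * PI ->
  scaling_defect a y < 2 / 3 -> scaling_defect a z < 2 / 3 ->
  scaling_defect a z = 3 * scaling_defect a y.
Proof.
  intros Hy Hz Hny Hnz Hdy Hdz.
  destruct (scaled_root_index y n Hy Hny) as [m Hm].
  destruct (scaled_root_index z _ Hz Hnz) as [m' Hm'].
  pose proof (scaling_defect_pos a y a_gt1 Hy) as Hpy.
  pose proof (scaling_defect_pos a z a_gt1 Hz) as Hpz.
  pose proof (scaling_defect_roots a y n m ltac:(lra) Hy Hny Hm) as Ey.
  pose proof (scaling_defect_roots a z _ m' ltac:(lra) Hz Hnz Hm') as Ez.
  rewrite plus_IZR, mult_IZR in Ez.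
  (* the defect at z minus 3 times the one at y is 2 (3 m + 1 - m'), in (-2, 2/3) *)
  assert (Hm3 : (3 * m + 1 - m')%Z = 0%Z).
  { apply one_IZR_lt1. rewrite minus_IZR, plus_IZR, mult_IZR. lra. }
  apply (f_equal IZR) in Hm3. rewrite minus_IZR, plus_IZR, mult_IZR in Hm3.
  lra.
Qed.

Definition large_root_defect (d : R) : Prop :=
  exists (n : Z) (y : R), (0 <= n)%Z /\ 3 * a <= PI * y /\
    y - atan y = IZR n * PI /\ scaling_defect a y = d.

Lemma large_root_defect_bounds (d : R) :
  large_root_defect d -> 0 < d < 2 / 3.
Proof.
  intros (n & y & _ & Hy & _ & <-). pose proof PI_RGT_0 as Hpi.
  split; [apply scaling_defect_pos; nra|].
  apply Rlt_le_trans with (2 * a / (PI * y)); [apply scaling_defect_lt; nra|].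
  unfold Rdiv. apply Rmult_le_reg_r with (PI * y); [nra|].
  rewrite Rmult_assoc, Rinv_l by nra. lra.
Qed.

Lemma large_root_defect_triple (d : R) :
  large_root_defect d -> large_root_defect (3 * d).
Proof.
  intros Hd. pose proof (large_root_defect_bounds d Hd) as Hdy.
  destruct Hd as (n & y & Hn & Hy & Hny & <-). pose proof PI_RGT_0 as Hpi.
  destruct (sub_atan_surjective (IZR (3 * n + 1) * PI)) as [z Hnz].
  assert (Hzy : y < z).
  { apply IZR_le in Hn. rewrite plus_IZR, mult_IZR in Hnz.
    pose proof (atan_bound y). pose proof (atan_bound z). nra. }
  assert (Hz : large_root_defect (scaling_defect a z)).
  { exists (3 * n + 1)%Z, z. repeat split; [lia | nra | exact Hnz]. }
  pose proof (large_root_defect_bounds _ Hz) as Hdz.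
  rewrite <- (scaling_defect_triple y z n ltac:(nra) ltac:(nra) Hny Hnz
                ltac:(lra) ltac:(lra)).
  exact Hz.
Qed.

Lemma large_root_defect_exists : exists d, large_root_defect d.
Proof.
  pose proof PI_RGT_0 as Hpi.
  set (r := (3 * a / PI + PI / 2) / PI).
  assert (Hr : r * PI = 3 * a / PI + PI / 2) by (unfold r; field; lra).
  assert (Ha : PI * (3 * a / PI) = 3 * a) by (field; lra).
  destruct (archimed r) as [Hup _].
  destruct (sub_atan_surjective (IZR (up r) * PI)) as [y Hy].
  pose proof (atan_bound y).
  exists (scaling_defect a y), (up r), y.
  repeat split; [apply le_IZR; nra | nra | exact Hy].
Qed.

Lemma tan_roots_not_scale_invariant : False.
Proof.
  destruct large_root_defect_exists as [d Hd].
  exact (tripling_closed_bounded_empty large_root_defect (2 / 3)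
           large_root_defect_bounds large_root_defect_triple d Hd).
Qed.

End ScalingTanRoots.

Theorem lemmaA1 (u : nat -> R) (hu : enumerates_pos_tan_roots u) :
  forall s : R, 0 < s < 1 -> exists k0 : nat, ~ tan_root (u k0 / s).
Proof.
  intros s Hs. apply NNPP. intros Hall.
  apply (tan_roots_not_scale_invariant (/ s)).
  - rewrite <- Rinv_1. apply Rinv_lt_contravar; lra.
  - intros x Hx Hroot.
    destruct (proj1 (proj2 hu x) (conj Hx Hroot)) as [k <-].
    replace (/ s * u k) with (u k / s) by (unfold Rdiv; ring).
    apply NNPP. intros Hk. apply Hall. exists k. exact Hk.
Qed.
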